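(* Let $u$ generate a cyclic group of order $q$ (a power of 2) and let $0<\ell,k\le q/2$ be odd integers. Then there is a decomposition $V(2\ell)\otimes V(2k)=W\perp W'$ into $K[u]$-submodules $W,W'$ that are orthogonal with respect to the tensor product form, such that $W\cong\operatorname{Ind}_{\langle u^2\rangle}^{\langle u\rangle}(V_\ell\otimes V_k)\cong W'$ as $K[u]$-modules.
   Context: $K$ is algebraically closed of characteristic 2; $V_d$ is the $d$-dimensional indecomposable module for a cyclic 2-group (one unipotent Jordan block). For $d=2m$ even, $V(d)$ is $V_d$ with basis $e_1,\dots,e_d$, $ue_1=e_1$, $ue_i=e_i+\cdots+e_1$ ($2\le i\le m+1$), $ue_i=e_i+e_{i-1}$ ($m+1<i\le d$), form $b(e_i,e_j)=1$ iff $i+j=d+1$. The tensor product of bilinear modules $(V,b)\otimes(V',b')$ carries the form $(v_1\otimes v_1',v_2\otimes v_2')\mapsto b(v_1,v_2)b'(v_1',v_2')$. $\operatorname{Ind}_H^G(M)=K[G]\otimes_{K[H]}M$. *)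

From HB Require Import structures.
From mathcomp Require Import all_boot all_order all_algebra.
Set Implicit Arguments. Unset Strict Implicit. Unset Printing Implicit Defensive.
Import GRing.Theory.
Local Open Scope ring_scope.

(* Conventions: a K[u]-module of dimension n is K^n (row vectors 'rV_n) with
   the generator u acting by the matrix g : 'M_n via  v |-> v *m g.
   Thus row i of g is the coordinate vector of u e_i (0-based indices). *)

(* Kronecker (tensor) product of matrices; the basis of K^m1 (x) K^m2 is
   e_(i1) (x) e_(i2) indexed by mxvec_index i1 i2 = i1 * m2 + i2. *)
Definition kron (R : pzRingType) m1 n1 m2 n2
    (A : 'M[R]_(m1, n1)) (B : 'M[R]_(m2, n2)) : 'M[R]_(m1 * m2, n1 * n2) :=
  \matrix_(i, j) \sum_(i1 < m1) \sum_(i2 < m2) \sum_(j1 < n1) \sum_(j2 < n2)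
     (((i == mxvec_index i1 i2) && (j == mxvec_index j1 j2))%:R
        * A i1 j1 * B i2 j2).

(* V(2m): u e_1 = e_1, u e_i = e_i + ... + e_1 (2 <= i <= m+1),
   u e_i = e_i + e_(i-1) (m+1 < i <= 2m).  0-based: row i. *)
Definition Vmx (K : pzRingType) (m : nat) : 'M[K]_(2 * m) :=
  \matrix_(i, j) (if (i <= m)%N then (j <= i)%N%:R
                  else ((j == i) || (j.+1 == i))%:R).

(* Gram matrix of the form on V(2m): b(e_i, e_j) = 1 iff i + j = d + 1
   (1-based), i.e. i + j = 2m - 1 (0-based). *)
Definition Vform (K : pzRingType) (m : nat) : 'M[K]_(2 * m) :=
  \matrix_(i, j) ((i + j)%N == (2 * m).-1)%:R.

(* V_n: one unipotent Jordan block: u e_i = e_i + e_(i-1). *)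
Definition Jblock (K : pzRingType) (n : nat) : 'M[K]_n :=
  \matrix_(i, j) ((j == i) || (j.+1 == i))%:R.

(* Ind from <u^2> to <u> of a K[u^2]-module M (u^2 acting by a : 'M_p):
   K[<u>] (x)_{K[<u^2>]} M has basis 1 (x) m_i (first p), u (x) m_i (last p);
   u.(1 (x) m) = u (x) m,  u.(u (x) m) = 1 (x) (u^2 . m). *)
Definition Indmx (K : pzRingType) (p : nat) (a : 'M[K]_p) : 'M[K]_(p + p) :=
  block_mx 0 1%:M a 0.

From HB Require Import structures.
From mathcomp Require Import all_boot all_order all_algebra.
From mathcomp Require Import zify.
From mathcomp.real_closed Require Import mxtens.
Import GRing.Theory.
Local Open Scope ring_scope.
Set Implicit Arguments. Unset Strict Implicit. Unset Printing Implicit Defensive.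

(* On V(2m)
   write g = Vmx m for the action of u and N = g - 1; in characteristic 2,
   g^2 = 1 + N^2.  Let x be the last basis vector and consider the Krylov
   vectors x N^t.  For m odd, the m "even" ones x N^(2s), stacked into a
   matrix P, satisfy
     (a) P g^2 = J_m P : they span a u^2-submodule isomorphic to V_m;
     (b) P B P^T = 0 : they vanish on even coordinates, while the form B
         pairs coordinates of opposite parity, so P is totally isotropic,
         and so is P g because B is u-invariant;
     (c) the rows of P and P g together span V(2m) (the Krylov vectors
         form a triangular basis).
   On V(2l) (x) V(2k) take F = P_l (x) P_k and F' = P_l (x) P_k g.  Both
   intertwine u^2 with J_l (x) J_k, so the frames [F; F g] and [F'; F' g]
   are images of Ind(V_l (x) V_k).  The form pairs them to 0 by (b), and by
   (c) together they span everything; a dimension count then makes their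
   row spaces W, W' complementary, which is the theorem. *)

Lemma natr_mod2 (K : fieldType) (hK : (2 \in [pchar K])%N) n :
  n%:R = (odd n)%:R :> K.
Proof.
rewrite -{1}(odd_double_half n) natrD -muln2 natrM (pcharf0 hK) mulr0 addr0.
by case: (odd n).
Qed.

Lemma mx_sqr_add1 (K : fieldType) (hK : (2 \in [pchar K])%N) n (X : 'M[K]_n) :
  (X + 1%:M) *m (X + 1%:M) = 1%:M + X *m X.
Proof.
have XX : X + X = 0 by rewrite -mulr2n -scaler_nat (pcharf0 hK) scale0r.
rewrite mulmxDl !mulmxDr !mulmx1 mul1mx -!addrA [X + (_ + _)]addrA XX.
by rewrite add0r addrC.
Qed.

Lemma count_interval n lo hi :
  (\sum_(i < n) ((lo <= i) && (i < hi)))%N = (minn hi n - lo)%N.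
Proof.
elim: n => [|n IH]; first by rewrite big_ord0; lia.
rewrite big_ord_recr /= IH.
by case: (leqP lo n) => h1; case: (ltnP n hi) => h2 /=; lia.
Qed.

Lemma sum_delta (K : pzRingType) n (F : 'I_n -> K) (k : 'I_n) :
  \sum_(a < n) ((nat_of_ord a == k)%N)%:R * F a = F k.
Proof.
rewrite (bigD1 k) //= eqxx mul1r big1 ?addr0 // => a /negPf.
by rewrite -val_eqE /= => ->; rewrite mul0r.
Qed.

Lemma odd_small c (b : bool) : (c == 1)%N = b -> (c <= 2)%N -> odd c = b.
Proof. by case: c => [|[|[|c]]] //= <-. Qed.

Lemma oddE n : odd n -> n = (n./2).*2.+1.
Proof. by move=> o; rewrite -{1}(odd_double_half n) o. Qed.

Lemma evenE n : ~~ odd n -> n = (n./2).*2.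
Proof. by move=> /negPf o; rewrite -{1}(odd_double_half n) o. Qed.

(* Given rows F spanning a u^2-stable subspace, the frame [F; F g] is the
   image of a map from an induced module K[u] (x)_(K[u^2]) M. *)
Definition ind_frame (K : pzRingType) p n (F : 'M[K]_(p, n)) (g : 'M[K]_n) :
  'M[K]_(p + p, n) := col_mx F (F *m g).

Lemma ind_frame_intertwine (K : pzRingType) p n (F : 'M[K]_(p, n))
    (a : 'M[K]_p) (g : 'M[K]_n) :
  a *m F = F *m g *m g -> Indmx a *m ind_frame F g = ind_frame F g *m g.
Proof.
move=> h; rewrite /Indmx /ind_frame mul_block_col mul_col_mx.
by rewrite !mul0mx add0r mul1mx addr0 h.
Qed.

Lemma intertwine_stable (K : fieldType) p n (f : 'M[K]_(p, n)) (a : 'M[K]_p)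
    (g : 'M[K]_n) :
  a *m f = f *m g -> stablemx <<f>>%MS g.
Proof. by move=> h; rewrite (eqmxMr _ (genmxE f)) genmxE -h submxMl. Qed.

Lemma genmx_orthogonal (K : fieldType) p p' n (f : 'M[K]_(p, n))
    (f' : 'M[K]_(p', n)) (B : 'M[K]_n) :
  f *m B *m f'^T = 0 -> <<f>>%MS *m B *m (<<f'>>%MS)^T = 0.
Proof.
move=> h.
have /submxP [X ->] : (<<f>> <= f)%MS by rewrite genmxE.
have /submxP [Y ->] : (<<f'>> <= f')%MS by rewrite genmxE.
by rewrite trmx_mul !mulmxA -(mulmxA X) -(mulmxA X) h mulmx0 mul0mx.
Qed.

Lemma complementary_rows (K : fieldType) p p' n (f : 'M[K]_(p, n))
    (f' : 'M[K]_(p', n)) :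
  (p + p' = n)%N -> row_full (col_mx f f') ->
  [/\ row_free f, row_free f', mxdirect (<<f>> + <<f'>>)
    & (<<f>> + <<f'>> == 1%:M)%MS].
Proof.
move=> dim_n full.
have span : (<<f>> + <<f'>> :=: col_mx f f')%MS.
  exact: eqmx_trans (adds_eqmx (genmxE f) (genmxE f')) (addsmxE f f').
have rank_n : \rank (col_mx f f') = n by apply/eqP.
have [rank_le _] := mxrank_adds_leqif <<f>>%MS <<f'>>%MS.
move: rank_le; rewrite span rank_n !genmxE => rank_le.
have rank_f : \rank f = p by have := rank_leq_row f; have := rank_leq_row f'; lia.
have rank_f' : \rank f' = p' by have := rank_leq_row f'; lia.
split.
- by rewrite -row_leq_rank rank_f.
- by rewrite -row_leq_rank rank_f'.
- by rewrite mxdirectE /= !genmxE span rank_n rank_f rank_f' dim_n.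
- by apply/andP; split; [exact: submx1 | rewrite span sub1mx].
Qed.

Lemma sub_col_mxl (K : fieldType) m1 m2 n (A : 'M[K]_(m1, n)) (B : 'M[K]_(m2, n)) :
  (A <= col_mx A B)%MS.
Proof. by rewrite -addsmxE addsmxSl. Qed.

Lemma sub_col_mxr (K : fieldType) m1 m2 n (A : 'M[K]_(m1, n)) (B : 'M[K]_(m2, n)) :
  (B <= col_mx A B)%MS.
Proof. by rewrite -addsmxE addsmxSr. Qed.

Lemma index_allpairs (T1 T2 : eqType) (s : seq T1) (t : seq T2) x y :
  x \in s -> y \in t ->
  index (x, y) [seq (a, b) | a <- s, b <- t] = (index x s * size t + index y t)%N.
Proof.
have pinj (a : T1) : injective (pair a : T2 -> T1 * T2) by move=> b1 b2 [].
elim: s => [|a s IH] //= xs yt; rewrite index_cat.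
have [-> | ne] := eqVneq a x.
  by rewrite (mem_map (pinj x)) yt mul0n add0n (index_map (pinj x)).
rewrite (_ : (x, y) \in _ = false); last first.
  by apply/negP => /mapP [b _ [e _]]; rewrite e eqxx in ne.
rewrite IH; first by rewrite size_map mulSn addnA.
- by move: xs; rewrite inE eq_sym (negPf ne).
- exact: yt.
Qed.

Lemma mxvec_index_val m n (i : 'I_m) (j : 'I_n) :
  nat_of_ord (mxvec_index i j) = (i * n + j)%N.
Proof.
rewrite /mxvec_index /= /enum_rank enum_rank_in.unlock insubdK.
  rewrite enumT (_ : Finite.enum _ = prod_enum 'I_m 'I_n); last by rewrite unlock.
  by rewrite /prod_enum index_allpairs ?mem_enum // size_enum_ord !index_enum_ord.
by rewrite cardE [_ \in _]index_mem mem_enum.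
Qed.

Lemma kron_tensmx (K : fieldType) m1 n1 m2 n2 (A : 'M[K]_(m1, n1))
    (B : 'M[K]_(m2, n2)) :
  kron A B = A *t B.
Proof.
have idx m n (i a : 'I_m) (j b : 'I_n) : (mxtens_index (i, j) == mxvec_index a b)
    = ((nat_of_ord a == i) && (nat_of_ord b == j))%N.
  rewrite -[_ == _]/(nat_of_ord (mxtens_index (i, j)) == mxvec_index a b)%N.
  by rewrite mxvec_index_val /= eq_addl_mul ?ltn_ord // xpair_eqE.
apply/matrixP => i j.
case: (mxtens_indexP i) => i1 i2; case: (mxtens_indexP j) => j1 j2.
rewrite tensmxE mxE.
transitivity (\sum_(a1 < m1) ((nat_of_ord a1 == i1)%N)%:R *
    \sum_(a2 < m2) ((nat_of_ord a2 == i2)%N)%:R *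
    \sum_(b1 < n1) ((nat_of_ord b1 == j1)%N)%:R *
    \sum_(b2 < n2) ((nat_of_ord b2 == j2)%N)%:R * (A a1 b1 * B a2 b2));
  last by rewrite !sum_delta.
apply: eq_bigr => a1 _; rewrite mulr_sumr; apply: eq_bigr => a2 _.
rewrite !mulr_sumr; apply: eq_bigr => b1 _; rewrite !mulr_sumr; apply: eq_bigr => b2 _.
rewrite !idx.
by do 4!case: eqP => _; rewrite /= ?mul0r ?mul1r ?mulr0 ?mulr1 ?mulrA.
Qed.

Lemma tensmxDl (K : fieldType) m n p q (X Y : 'M[K]_(m, n)) (C : 'M[K]_(p, q)) :
  (X + Y) *t C = X *t C + Y *t C.
Proof. by apply/matrixP => i j; rewrite !mxE mulrDl. Qed.

Lemma tensmxDr (K : fieldType) m n p q (X Y : 'M[K]_(m, n)) (C : 'M[K]_(p, q)) :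
  C *t (X + Y) = C *t X + C *t Y.
Proof. by apply/matrixP => i j; rewrite !mxE mulrDr. Qed.

Lemma tensmx11 (K : fieldType) a b : (1%:M : 'M[K]_a) *t (1%:M : 'M[K]_b) = 1%:M.
Proof.
apply/matrixP => i j.
case: (mxtens_indexP i) => i1 i2; case: (mxtens_indexP j) => j1 j2.
rewrite tensmxE !mxE -natrM mulnb.
rewrite -[_ == mxtens_index _]/(nat_of_ord (mxtens_index (i1, i2))
  == nat_of_ord (mxtens_index (j1, j2)))%N.
by rewrite /= eq_addl_mul ?ltn_ord // xpair_eqE.
Qed.

Lemma tensmx_gram (K : fieldType) m1 m2 n1 n2 p1 p2 (A : 'M[K]_(m1, n1))
    (A' : 'M[K]_(m2, n2)) (B : 'M[K]_n1) (B' : 'M[K]_n2) (C : 'M[K]_(p1, n1))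
    (C' : 'M[K]_(p2, n2)) :
  (A *t A') *m (B *t B') *m (C *t C')^T = (A *m B *m C^T) *t (A' *m B' *m C'^T).
Proof. by rewrite trmx_tens !tensmx_mul. Qed.

Lemma col_mx_split (K : fieldType) m1 m2 n (A : 'M[K]_(m1, n)) (B : 'M[K]_(m2, n)) :
  col_mx A B = col_mx 1%:M 0 *m A + col_mx 0 1%:M *m B.
Proof. by rewrite !mul_col_mx !mul1mx !mul0mx add_col_mx addr0 add0r. Qed.

Lemma col_tensmx_sub (K : fieldType) m1 m2 n p q s (A : 'M[K]_(m1, n))
    (B : 'M[K]_(m2, n)) (C : 'M[K]_(p, q)) (S : 'M[K]_(s, n * q)) :
  (A *t C <= S)%MS -> (B *t C <= S)%MS -> (col_mx A B *t C <= S)%MS.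
Proof.
have sub r r' (E : 'M[K]_(r, r')) (X : 'M[K]_(r', n)) : ((E *m X) *t C <= X *t C)%MS.
  by rewrite -[C in X in (X <= _)%MS]mul1mx -tensmx_mul submxMl.
move=> sA sB; rewrite col_mx_split tensmxDl; apply: addmx_sub.
  exact: submx_trans (sub _ _ _ A) sA.
exact: submx_trans (sub _ _ _ B) sB.
Qed.

Lemma tensmx_col_sub (K : fieldType) m1 m2 n p q s (A : 'M[K]_(m1, n))
    (B : 'M[K]_(m2, n)) (C : 'M[K]_(p, q)) (S : 'M[K]_(s, q * n)) :
  (C *t A <= S)%MS -> (C *t B <= S)%MS -> (C *t col_mx A B <= S)%MS.
Proof.
have sub r r' (E : 'M[K]_(r, r')) (X : 'M[K]_(r', n)) : (C *t (E *m X) <= C *t X)%MS.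
  by rewrite -[C in X in (X <= _)%MS]mul1mx -tensmx_mul submxMl.
move=> sA sB; rewrite col_mx_split tensmxDr; apply: addmx_sub.
  exact: submx_trans (sub _ _ _ A) sA.
exact: submx_trans (sub _ _ _ B) sB.
Qed.

Lemma tensmx_row_full (K : fieldType) m1 n1 m2 n2 (A : 'M[K]_(m1, n1))
    (B : 'M[K]_(m2, n2)) :
  row_full A -> row_full B -> row_full (A *t B).
Proof.
move=> /row_fullP [X hX] /row_fullP [Y hY]; apply/row_fullP.
by exists (X *t Y); rewrite tensmx_mul hX hY tensmx11.
Qed.

Section V2m.
Variables (K : fieldType) (m : nat).
Hypothesis hK : (2 \in [pchar K])%N.

Local Notation n := (2 * m)%N.

Definition Vnil : 'M[K]_n := Vmx K m - 1%:M.

Lemma VnilE (i j : 'I_n) :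
  Vnil i j = (if (i <= m)%N then (j < i)%N else (j.+1 == i)%N)%:R.
Proof.
rewrite /Vnil !mxE -!val_eqE /=.
case: ifP => _; case: (ssrnat.ltngtP i j) => h /=.
all: rewrite ?(introF eqP (_ : nat_of_ord i <> j)) ?(introF eqP (_ : nat_of_ord j <> i)); try lia.
all: rewrite ?h ?eqxx ?subr0 ?subrr //.
by rewrite eqn_leq ltnn.
Qed.

Lemma Vnil_upper (i j : 'I_n) : (i <= j)%N -> Vnil i j = 0.
Proof.
move=> h; rewrite VnilE; case: ifP => _; first by rewrite ltnNge h.
by rewrite (introF eqP (_ : j.+1 <> i)) //; lia.
Qed.

Lemma Vnil_subdiag (i j : 'I_n) : j.+1 = i -> Vnil i j = 1.
Proof. by move=> h; rewrite VnilE -h ltnSn eqxx if_same. Qed.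

Definition krylov t : 'rV[K]_n :=
  (\row_j ((nat_of_ord j == n.-1)%N)%:R) *m Vnil ^+ t.

Lemma krylovE t (j : 'I_n) :
  (n.-1 <= j + t)%N -> krylov t 0 j = ((j + t)%N == n.-1)%:R.
Proof.
elim: t j => [|t IH] j hj; first by rewrite /krylov expr0 mulmx1 mxE addn0.
rewrite /krylov exprSr mulmxA mxE -/(krylov t).
rewrite (eq_bigr (fun a : 'I_n =>
    ((j.+1 <= a) && (a < j.+1 + ((j + t.+1)%N == n.-1)))%N%:R)); last first.
  move=> a _; case: (ssrnat.ltngtP a j.+1) => ha.
  - by rewrite Vnil_upper ?mulr0 ?(introF andP (_ : ~ (_ /\ _))) //; lia.
  - rewrite IH; last lia.
    by rewrite (introF eqP (_ : (a + t)%N <> n.-1)) ?mul0r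
      ?(introF andP (_ : ~ (_ /\ _))) //; lia.
  - by rewrite Vnil_subdiag ?IH ?mulr1; [congr (_%:R); lia | lia | lia].
by rewrite -natr_sum count_interval; congr (_%:R); lia.
Qed.

Lemma Vmx_square : Vmx K m *m Vmx K m = 1%:M + Vnil *m Vnil.
Proof.
have -> : Vmx K m = Vnil + 1%:M by rewrite /Vnil subrK.
exact: (mx_sqr_add1 hK).
Qed.

Definition evenKrylov : 'M[K]_(m, n) :=
  \matrix_(i < m, j < n) krylov (2 * (m.-1 - i)) 0 j.

Lemma row_evenKrylov (i : 'I_m) : row i evenKrylov = krylov (2 * (m.-1 - i)).
Proof. by apply/rowP => j; rewrite !mxE. Qed.

Lemma evenKrylov_square :
  evenKrylov *m Vmx K m *m Vmx K m = Jblock K m *m evenKrylov.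
Proof.
rewrite -mulmxA Vmx_square mulmxDr mulmx1.
apply/matrixP => i j; rewrite [LHS]mxE.
have -> : (evenKrylov *m (Vnil *m Vnil)) i j = krylov (2 * (m.-1 - i) + 2) 0 j.
  have -> : krylov (2 * (m.-1 - i) + 2) = krylov (2 * (m.-1 - i)) *m (Vnil *m Vnil).
    by rewrite /krylov -mulmxA exprD expr2.
  by rewrite -row_evenKrylov -row_mul [RHS]mxE.
rewrite [RHS]mxE (eq_bigr (fun a => ((nat_of_ord a == i)%N)%:R * evenKrylov a j
    + ((a.+1 == i)%N)%:R * evenKrylov a j)); last first.
  move=> a _; rewrite mxE -mulrDl -val_eqE /=; congr (_ * _).
  by case: eqP => h1; case: eqP => h2 /=; rewrite ?addr0 ?add0r //; lia.
rewrite big_split /= sum_delta; congr (_ + _).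
have lt_i := ltn_ord i; case: (posnP i) => [i0 | i_gt0].
  rewrite big1; last by move=> a _; rewrite i0 mul0r.
  by rewrite krylovE ?(introF eqP (_ : (j + _)%N <> n.-1)) //; lia.
have lt_pi : (i.-1 < m)%N by lia.
rewrite (eq_bigr (fun a => ((nat_of_ord a == Ordinal lt_pi)%N)%:R * evenKrylov a j));
  last by move=> a _ /=; congr (_%:R * _); lia.
by rewrite sum_delta [RHS]mxE /= (_ : (2 * _ + 2 = 2 * (m.-1 - i.-1))%N) //; lia.
Qed.

Lemma Vmx_formE (i b : 'I_n) :
  (Vmx K m *m Vform K m) i b = Vmx K m i (rev_ord b).
Proof.
rewrite mxE -(sum_delta (Vmx K m i) (rev_ord b)); apply: eq_bigr => a _.
rewrite [Vform K m a b]mxE mulrC; congr (_%:R * _) => /=.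
by move: (ltn_ord a) (ltn_ord b); lia.
Qed.

Lemma Vform_invariant : Vmx K m *m Vform K m *m (Vmx K m)^T = Vform K m.
Proof.
apply/matrixP => i j; rewrite mxE.
rewrite (eq_bigr (fun b : 'I_n =>
   ((if (i <= m)%N then ((n - b.+1) <= i)%N
     else (((n - b.+1) == i) || ((n - b.+1).+1 == i))%N) &&
    (if (j <= m)%N then (b <= j)%N
     else ((nat_of_ord b == j) || (b.+1 == j))%N))%:R)); last first.
  move=> b _; rewrite Vmx_formE [(Vmx K m)^T b j]mxE !mxE.
  by do 2!case: ifP => _; rewrite -natrM mulnb -?val_eqE.
rewrite -natr_sum [RHS]mxE (natr_mod2 hK) [in RHS](natr_mod2 hK); congr (_%:R).
have hi := ltn_ord i; have hj := ltn_ord j; rewrite oddb; apply: congr1.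
(* in each case the summation range is an interval of length at most 2 *)
case: (leqP i m) => hi'; case: (leqP j m) => hj'.
- rewrite (eq_bigr (fun b : 'I_n => nat_of_bool ((n.-1 - i <= b) && (b < j.+1))%N));
    last by move=> b _; move: (ltn_ord b); lia.
  by rewrite count_interval; apply: odd_small; lia.
- rewrite (eq_bigr (fun b : 'I_n =>
      nat_of_bool ((maxn (n.-1 - i) j.-1 <= b) && (b < j.+1))%N));
    last by move=> b _; move: (ltn_ord b); lia.
  by rewrite count_interval; apply: odd_small; lia.
- rewrite (eq_bigr (fun b : 'I_n =>
      nat_of_bool ((n.-1 - i <= b) && (b < (minn (n - i) j).+1))%N));
    last by move=> b _; move: (ltn_ord b); lia.
  by rewrite count_interval; apply: odd_small; lia.
- rewrite big1 => [|b _]; last by move: (ltn_ord b); lia.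
  by apply: odd_small; lia.
Qed.

Definition krylov_basis : 'M[K]_n := \matrix_(i, j) krylov (n.-1 - i) 0 j.

Lemma krylov_basis_unit : krylov_basis \in unitmx.
Proof.
rewrite unitmxE det_trig.
  rewrite big1 ?unitr1 // => i _; rewrite mxE krylovE; last lia.
  by rewrite (introT eqP (_ : (i + _)%N = n.-1)) //; move: (ltn_ord i); lia.
apply/is_trig_mxP => i j hij; rewrite mxE krylovE; last lia.
by rewrite (introF eqP (_ : (j + _)%N <> n.-1)) //; move: (ltn_ord i); lia.
Qed.

Lemma evenKrylov_span : row_full (ind_frame evenKrylov (Vmx K m)).
Proof.
rewrite -sub1mx; apply: (submx_trans (B := krylov_basis)).
  by rewrite sub1mx row_full_unit krylov_basis_unit.
apply/row_subP => i.
have -> : row i krylov_basis = krylov (n.-1 - i) by apply/rowP => j; rewrite !mxE.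
have lt_i := ltn_ord i; set t := (n.-1 - i)%N.
have lt_s : (m.-1 - t./2 < m)%N by lia.
have even_row : krylov (2 * t./2) = row (Ordinal lt_s) evenKrylov.
  by rewrite row_evenKrylov; congr krylov => /=; lia.
have even_sub : (krylov (2 * t./2) <= ind_frame evenKrylov (Vmx K m))%MS.
  by rewrite even_row; exact: submx_trans (row_sub _ _) (sub_col_mxl _ _).
case odd_t: (odd t); last by rewrite (evenE (negbT odd_t)) -mul2n.
have -> : krylov t = krylov (2 * t./2) *m Vmx K m - krylov (2 * t./2).
  rewrite -[X in _ = _ - X]mulmx1 -mulmxBr {1}(oddE odd_t) -mul2n.
  by rewrite /krylov exprSr mulmxA.
apply: addmx_sub; last by rewrite eqmx_opp.
rewrite even_row -row_mul; exact: submx_trans (row_sub _ _) (sub_col_mxr _ _).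
Qed.

Lemma Jblock_unit : Jblock K m \in unitmx.
Proof.
rewrite unitmxE det_trig.
  by rewrite big1 ?unitr1 // => i _; rewrite mxE eqxx.
apply/is_trig_mxP => i j hij; rewrite mxE -val_eqE /=.
by rewrite (introF orP (_ : ~ (_ \/ _))) //; lia.
Qed.

Section OddDimension.
Hypothesis hm : odd m.

Lemma Vnil2_odd_even (a j : 'I_n) :
  odd a -> ~~ odd j -> (Vnil *m Vnil) a j = 0.
Proof.
move=> oa ej; have Ha := oddE oa; have Hj := evenE ej; have Hm := oddE hm.
rewrite mxE; case: (leqP a m) => ha.
- rewrite (eq_bigr (fun c : 'I_n => ((j.+1 <= c) && (c < a))%N%:R)).
    rewrite -natr_sum count_interval (natr_mod2 hK) (minn_idPl _); last lia.
    case: (leqP j.+1 a) => h; last by rewrite (_ : (a - j.+1)%N = 0%N) //; lia.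
    by rewrite oddB //= oa (negPf ej).
  move=> c _; rewrite (@VnilE a c) ha.
  case: (ltnP c a) => hc; last by rewrite mul0r (introF andP (_ : ~ (_ /\ _))) //; lia.
  by rewrite mul1r VnilE ifT; [congr (_%:R); lia | lia].
- rewrite big1 // => c _; rewrite (@VnilE a c) ifF; last lia.
  case: eqP => hc; last by rewrite mul0r.
  by rewrite mul1r VnilE ifF ?(introF eqP (_ : j.+1 <> c)) //; lia.
Qed.

Lemma krylov_even_vanish s (j : 'I_n) : ~~ odd j -> krylov (2 * s) 0 j = 0.
Proof.
elim: s j => [|s IH] j ej.
  rewrite /krylov expr0 mulmx1 mxE (introF eqP (_ : nat_of_ord j <> n.-1)) //.
  by have := evenE ej; have := ltn_ord j; have := oddE hm; lia.
rewrite /krylov mulnSr exprD expr2 mulmxA mxE big1 // => a _.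
case oa: (odd a); first by rewrite Vnil2_odd_even ?oa // mulr0.
by rewrite -/(krylov (2 * s)) IH ?oa // mul0r.
Qed.

(* (b) P is totally isotropic: B pairs coordinate a with 2m-1-a, of the
   opposite parity, and every row of P vanishes on even coordinates. *)
Lemma evenKrylov_isotropic : evenKrylov *m Vform K m *m evenKrylov^T = 0.
Proof.
apply/matrixP => i j; rewrite !mxE big1 // => b _.
case odd_b: (odd b); last first.
  by rewrite [evenKrylov^T b j]mxE [evenKrylov j b]mxE krylov_even_vanish ?odd_b ?mulr0.
rewrite mxE big1 ?mul0r // => a _; rewrite [Vform K m a b]mxE.
case: eqP => [pair_ab | _]; last by rewrite mulr0.
rewrite mxE krylov_even_vanish ?mul0r //; apply/negP => odd_a.
by move: (oddE hm) (oddE odd_b) (oddE odd_a) (ltn_ord a) (ltn_ord b); lia.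
Qed.

(* By u-invariance of the form, P g is totally isotropic as well. *)
Lemma evenKrylov_g_isotropic :
  (evenKrylov *m Vmx K m) *m Vform K m *m (evenKrylov *m Vmx K m)^T = 0.
Proof.
rewrite trmx_mul !mulmxA -(mulmxA evenKrylov) -(mulmxA evenKrylov).
by rewrite Vform_invariant evenKrylov_isotropic.
Qed.

End OddDimension.
End V2m.

Section TensorPair.
Variables (K : fieldType) (l k : nat).
Hypothesis hK : (2 \in [pchar K])%N.

Local Notation P1 := (evenKrylov K l).
Local Notation P2 := (evenKrylov K k).
Local Notation g1 := (Vmx K l).
Local Notation g2 := (Vmx K k).

Definition frameW := ind_frame (P1 *t P2) (g1 *t g2).
Definition frameW' := ind_frame (P1 *t (P2 *m g2)) (g1 *t g2).

Lemma frameW_intertwine :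
  Indmx (Jblock K l *t Jblock K k) *m frameW = frameW *m (g1 *t g2).
Proof.
by apply: ind_frame_intertwine; rewrite !tensmx_mul -!evenKrylov_square.
Qed.

Lemma frameW'_intertwine :
  Indmx (Jblock K l *t Jblock K k) *m frameW' = frameW' *m (g1 *t g2).
Proof.
apply: ind_frame_intertwine; rewrite !tensmx_mul.
by congr (_ *t _); rewrite ?mulmxA evenKrylov_square.
Qed.

Hypotheses (hl : odd l) (hk : odd k).

(* W and W' are orthogonal: each of the four blocks of the Gram matrix has
   an isotropic tensor factor. *)
Lemma frames_orthogonal :
  frameW *m (Vform K l *t Vform K k) *m frameW'^T = 0.
Proof.
have FG : (P1 *t P2) *m (g1 *t g2) = (P1 *m g1) *t (P2 *m g2) by rewrite tensmx_mul.
have F'G : (P1 *t (P2 *m g2)) *m (g1 *t g2) = (P1 *m g1) *t (Jblock K k *m P2).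
  by rewrite tensmx_mul evenKrylov_square.
have JP : P2 *m Vform K k *m (Jblock K k *m P2)^T = 0.
  by rewrite trmx_mul mulmxA evenKrylov_isotropic // mul0mx.
rewrite /frameW /frameW' /ind_frame FG F'G tr_col_mx !mul_col_mx !mul_mx_row.
rewrite !tensmx_gram JP !evenKrylov_isotropic // !evenKrylov_g_isotropic //.
by rewrite !tens0mx !tensmx0 !row_mx0 col_mx0.
Qed.

(* W + W' is everything: the rows of both frames span the tensor product
   of the frames [P_l; P_l g] and [P_k; P_k g], which span by (c). *)
Lemma frames_span : row_full (col_mx frameW frameW').
Proof.
set T := col_mx _ _.
have W_T : (frameW <= T)%MS by exact: sub_col_mxl.
have W'_T : (frameW' <= T)%MS by exact: sub_col_mxr.
rewrite -sub1mx; apply: (submx_trans (B := ind_frame P1 g1 *t ind_frame P2 g2)).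
  by rewrite sub1mx tensmx_row_full ?evenKrylov_span.
apply: col_tensmx_sub; apply: tensmx_col_sub.
- exact: submx_trans (sub_col_mxl _ _) W_T.
- exact: submx_trans (sub_col_mxl _ _) W'_T.
-
  have unit_1J : (1%:M : 'M[K]_l) *t Jblock K k \in unitmx.
    by apply: tensmx_unit; rewrite ?unitmx1 ?Jblock_unit // -lt0n odd_gt0.
  have -> : (P1 *m g1) *t P2 =
      invmx (1%:M *t Jblock K k) *m (P1 *t (P2 *m g2) *m (g1 *t g2)).
    rewrite tensmx_mul evenKrylov_square // -[P1 *m g1]mul1mx -tensmx_mul.
    by rewrite mulKmx // mul1mx.
  exact: submx_trans (submxMl _ _) (submx_trans (sub_col_mxr _ _) W'_T).
- by rewrite -tensmx_mul; exact: submx_trans (sub_col_mxr _ _) W_T.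
Qed.

End TensorPair.

Theorem lemma7p3 (K : closedFieldType) (hK : (2 \in [pchar K])%N)
    (q l k : nat) (hq : exists e, q = (2 ^ e)%N)
    (hl : odd l) (hk : odd k) (hl0 : (0 < l)%N) (hk0 : (0 < k)%N)
    (hlq : (l <= q %/ 2)%N) (hkq : (k <= q %/ 2)%N) :
  let g := kron (Vmx K l) (Vmx K k) in           (* action of u on V(2l) (x) V(2k) *)
  let B := kron (Vform K l) (Vform K k) in       (* tensor product form *)
  let I := Indmx (kron (Jblock K l) (Jblock K k)) in  (* Ind (V_l (x) V_k) *)
  exists W W' : 'M[K]_(2 * l * (2 * k)),
    [/\ stablemx W g, stablemx W' g,
        mxdirect (W + W') /\ (W + W' == 1%:M)%MS,
        W *m B *m W'^T = 0 &
        (exists f : 'M[K]_(l * k + l * k, 2 * l * (2 * k)),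
            [/\ row_free f, (f == W)%MS & I *m f = f *m g]) /\
        (exists f : 'M[K]_(l * k + l * k, 2 * l * (2 * k)),
            [/\ row_free f, (f == W')%MS & I *m f = f *m g])].
Proof.
move=> g B I; rewrite {}/g {}/B {}/I !kron_tensmx.
have dims : (l * k + l * k + (l * k + l * k) = 2 * l * (2 * k))%N by lia.
have [free_W free_W' direct full] := complementary_rows dims (frames_span hK hl hk).
exists <<frameW K l k>>%MS, <<frameW' K l k>>%MS; split.
- exact: intertwine_stable (frameW_intertwine l k hK).
- exact: intertwine_stable (frameW'_intertwine l k hK).
- by split.
- exact: genmx_orthogonal (frames_orthogonal hK hl hk).
- have gen_eq p n (f : 'M[K]_(p, n)) : (f == <<f>>)%MS.
    by apply/eqmxP; exact: eqmx_sym (genmxE f).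
  split; [exists (frameW K l k) | exists (frameW' K l k)].
  + by split; [exact: free_W | exact: gen_eq | exact: frameW_intertwine].
  + by split; [exact: free_W' | exact: gen_eq | exact: frameW'_intertwine].
Qed.
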